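(* Let $(M,d)$ be a compact metric space and $\varphi:M\to M$ continuous, and assume either (C) there is a homeomorphism $\theta$ of $M$ with $\theta\circ\theta=\mathrm{Id}_M$ and $\varphi=\theta\circ\varphi\circ\theta$ (set $\theta_n=\theta$), or (R) $\varphi$ is a homeomorphism and there is a homeomorphism $\theta$ with $\theta\circ\theta=\mathrm{Id}_M$ and $\varphi^{-1}=\theta\circ\varphi\circ\theta$ (set $\theta_n=\theta\circ\varphi^{n-1}$). Then $h_\varphi(\mathbb Q\circ\theta)=h_\varphi(\mathbb Q)$ for every $\mathbb Q\in\mathcal P_\varphi(M)$, and $\mathfrak p_\varphi(\mathcal G\circ\theta)=\mathfrak p_\varphi(\mathcal G)$ for every $\mathcal G\in\mathcal A(M)$, where $\mathcal G\circ\theta=\{G_n\circ\theta_n\}$.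
   Context: $\mathcal P_\varphi(M)$: $\varphi$-invariant Borel probability measures ($\mathbb Q\circ\theta$ is again invariant); $h_\varphi$: Kolmogorov–Sinai entropy. $C(M),B(M)$ continuous/bounded Borel real functions, sup norm; $S_nG=\sum_{k<n}G\circ\varphi^k$; $\mathcal A(M)$: sequences $\{G_n\}\subset B(M)$ with some $\{G^{(k)}\}\subset C(M)$ such that $\lim_k\limsup_nn^{-1}\|G_n-S_nG^{(k)}\|_\infty=0$. $B_n(x,\epsilon)=\{y:d(\varphi^ky,\varphi^kx)<\epsilon,0\le k<n\}$. Topological pressure: $\mathfrak p_\varphi(\mathcal G)=\lim_{\epsilon\downarrow0}\limsup_nn^{-1}\log\inf\{\sum_{x\in E}e^{G_n(x)}:E\text{ finite},\bigcup_{x\in E}B_n(x,\epsilon)=M\}\in(-\infty,+\infty]$. *)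

From HB Require Import structures.
From mathcomp Require Import all_boot all_order all_algebra.
From mathcomp Require Import all_classical all_reals all_analysis.
Set Implicit Arguments. Unset Strict Implicit. Unset Printing Implicit Defensive.
Import Order.TTheory GRing.Theory Num.Theory.
Import numFieldNormedType.Exports.
Local Open Scope classical_set_scope.
Local Open Scope ring_scope.

Notation borelM M := (g_sigma_algebraType (@open M)).

Section Defs.
Variables (R : realType) (M : pseudoPMetricType R).

Definition borel_sets : set (set M) := <<s @open M >>.


Definition homeomorphism (f : M -> M) : Prop :=
  exists g : M -> M, cancel f g /\ cancel g f /\ continuous f /\ continuous g.

Definition phi_invariant (phi : M -> M) (P : set M -> \bar R) : Prop :=
  forall A, borel_sets A -> P (phi @^-1` A) = P A.

Definition is_borel_partition (m : nat) (A : 'I_m -> set M) : Prop :=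
  (forall i, borel_sets (A i)) /\
  (forall i j, i != j -> A i `&` A j = set0) /\
  (forall x, exists i, A i x).

(* atom of the join xi v phi^-1 xi v ... v phi^-(n-1) xi indexed by w *)
Definition cyl (phi : M -> M) (m : nat) (A : 'I_m -> set M) (n : nat)
  (w : {ffun 'I_n -> 'I_m}) : set M :=
  [set x | forall k : 'I_n, A (w k) (iter k phi x)].

(* H_P( \/_{k<n} phi^-k xi ), with 0 log 0 = 0 (ln 0 = 0 in the library) *)
Definition join_entropy (P : set M -> \bar R) (phi : M -> M) (m : nat)
  (A : 'I_m -> set M) (n : nat) : R :=
  \sum_(w : {ffun 'I_n -> 'I_m})
    - (fine (P (cyl phi A w)) * ln (fine (P (cyl phi A w)))).

(* h(P, phi, xi) = lim_n n^-1 H(...) (limit exists; written as limsup) *)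
Definition entropy_part (P : set M -> \bar R) (phi : M -> M) (m : nat)
  (A : 'I_m -> set M) : \bar R :=
  limn_esup (fun n => ((n%:R)^-1 * join_entropy P phi A n)%:E).

Definition ks_entropy (P : set M -> \bar R) (phi : M -> M) : \bar R :=
  ereal_sup [set e | exists (m : nat) (A : 'I_m -> set M),
    is_borel_partition A /\ e = entropy_part P phi A].

Definition bowen_ball (phi : M -> M) (n : nat) (x : M) (e : R) : set M :=
  [set y | forall k, (k < n)%N -> ball (iter k phi x) e (iter k phi y)].

Definition cover_inf (phi : M -> M) (g : M -> R) (n : nat) (e : R) : \bar R :=
  ereal_inf [set ((\sum_(x <- s) expR (g x))%:E) | s in
    [set s : seq M | forall y, exists2 x, x \in s & bowen_ball phi n x e y]].

Definition elog (x : \bar R) : \bar R :=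
  match x with
  | EFin r => if (0 < r) then (ln r)%:E else -oo%E
  | +oo%E => +oo%E
  | -oo%E => -oo%E
  end.

(* p_phi(G) = lim_{e -> 0} limsup_n n^-1 log inf{...};
   the inner quantity is nonincreasing in e, so the limit is the sup over e>0 *)
Definition pressure (phi : M -> M) (G : nat -> M -> R) : \bar R :=
  ereal_sup [set limn_esup (fun n => ((n%:R)^-1)%:E * elog (cover_inf phi (G n) n e))%E
            | e in [set e : R | 0 < e]].

Definition birkhoff_sum (phi : M -> M) (g : M -> R) (n : nat) : M -> R :=
  fun x => \sum_(k < n) g (iter k phi x).

Definition supnorm (f : M -> R) : \bar R :=
  ereal_sup [set (`|f x|)%:E | x in [set: M]].

Definition bounded_borel (f : M -> R) : Prop :=
  (exists C : R, forall x, `|f x| <= C) /\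
  @measurable_fun _ _ (borelM M) R [set: M] f.

Definition in_A (phi : M -> M) (G : nat -> M -> R) : Prop :=
  (forall n, bounded_borel (G n)) /\
  exists Gk : nat -> M -> R, (forall k, continuous (Gk k)) /\
    (fun k => limn_esup (fun n =>
        ((n%:R)^-1)%:E * supnorm (G n \- birkhoff_sum phi (Gk k) n)%R)%E)
      @ \oo --> 0%E.

End Defs.

From HB Require Import structures.
From mathcomp Require Import all_boot all_order all_algebra.
From mathcomp Require Import all_classical all_reals all_analysis.
From mathcomp Require Import zify.
Import Order.TTheory GRing.Theory Num.Theory.
Import numFieldNormedType.Exports.
Local Open Scope classical_set_scope.
Local Open Scope ring_scope.

(* In both cases the map [thetas n] sends an orbit segment x, phi x, ..., phi^(n-1) x
   onto the theta-image of an orbit segment read in a permuted order (the same order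
   in case (C), the reversed one in case (R)).  For entropy, the atoms of the join of
   theta^-1 xi are therefore the preimages of the atoms of the join of xi under
   [theta \o phi^j], up to a relabelling of the atoms, and invariance of Q absorbs
   phi^j.  For pressure, uniform continuity of theta on the compact space maps
   (n, delta)-Bowen balls into (n, e)-Bowen balls uniformly in n, so spanning sets
   are transported by the involution [thetas n] at the cost of shrinking e. *)

Section Preliminaries.
Context {R : realType} {M : pseudoPMetricType R}.

Lemma borel_preimage {f : M -> M} {A : set M} :
  continuous f -> borel_sets A -> borel_sets (f @^-1` A).
Proof.
move=> fc; have mf : measurable_fun [set: borelM M] (f : borelM M -> borelM M).
  apply: measurability => // _ [B oB <-]; apply: sub_sigma_algebra.
  by rewrite setTI; exact: (proj1 (continuousP f) fc).
by move=> hA; have := mf measurableT A hA; rewrite setTI.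
Qed.

Lemma borel_iter_preimage (f : M -> M) k (A : set M) :
  continuous f -> borel_sets A -> borel_sets (iter k f @^-1` A).
Proof.
move=> fc; elim: k A => [//|k IH] A hA.
exact: (IH _ (borel_preimage fc hA)).
Qed.

Lemma borel_cyl (phi : M -> M) m (A : 'I_m -> set M) n (w : {ffun 'I_n -> 'I_m}) :
  continuous phi -> (forall i, borel_sets (A i)) -> borel_sets (cyl phi A w).
Proof.
move=> pc hA.
pose F i := if @insub _ (fun j => j < n)%N _ i is Some k
  then iter (nat_of_ord k) phi @^-1` A (w k) else setT.
have -> : cyl phi A w = \bigcap_i F i.
  apply/seteqP; split=> x /=.
    by move=> h i _; rewrite /F; case: insubP => [k _ _|_] //; exact: h.
  by move=> h k; have := h (nat_of_ord k) I; rewrite /F valK.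
apply: (@bigcapT_measurable _ (borelM M)) => i; rewrite /F.
case: insubP => [k _ _|_]; last exact: (@measurableT _ (borelM M)).
exact: borel_iter_preimage.
Qed.

Lemma borel_partition_preimage (f : M -> M) m (A : 'I_m -> set M) :
  continuous f -> is_borel_partition A -> is_borel_partition (fun i => f @^-1` A i).
Proof.
move=> fc [hB [hD hC]]; split; first by move=> i; exact: borel_preimage.
split; last by move=> x; exact: hC (f x).
by move=> i j ij; rewrite -preimage_setI (hD i j ij) preimage_set0.
Qed.

Lemma phi_invariant_iter {phi : M -> M} {P : set M -> \bar R} k :
  continuous phi -> phi_invariant phi P -> phi_invariant (iter k phi) P.
Proof.
move=> pc hP; elim: k => [//|k IH] S hS.
change (P (iter k phi @^-1` (phi @^-1` S)) = P S).
by rewrite IH ?hP //; exact: borel_preimage.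
Qed.

Lemma compact_unif_continuous {f : M -> M} :
  compact [set: M] -> continuous f -> forall e : R, 0 < e ->
  exists2 del : R, 0 < del & forall y z, ball y del z -> ball (f y) e (f z).
Proof.
move=> cM fc e e0.
pose P (n : nat) (y : M) := forall z, ball y n.+1%:R^-1 z -> ball (f y) e (f z).
have : \forall n \near \oo, [set: M] `<=` P n.
  apply: (proj1 (compact_near_coveringP _) cM) => x _.
  have /nbhs_ballP [eta /= eta0 feta] : nbhs x (f @^-1` ball (f x) (e / 2)).
    by apply: fc; exact: nbhsx_ballx (divr_gt0 e0 _).
  exists (ball x (eta / 2), [set n : nat | n.+1%:R^-1 < eta / 2]).
    split => /=; first exact: nbhsx_ballx (divr_gt0 eta0 _).
    exact: (near_infty_natSinv_lt (PosNum (divr_gt0 eta0 (ltr0Sn _ 1%N)))).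
  move=> [y n] /= [bxy hn] z byz; apply: (@ball_splitr _ _ (f x)).
    apply: feta; apply: le_ball bxy.
    by rewrite ler_pdivrMr // ler_peMr // ?ler1n // ltW.
  apply: feta; rewrite (splitr eta); apply: ball_triangle bxy _.
  exact: le_ball (ltW hn) _ byz.
by move=> /filter_ex [n Pn]; exists n.+1%:R^-1 => // y z; apply: Pn.
Qed.

Lemma iter_conj {f g h : M -> M} k x :
  (forall y, f (h y) = h (g y)) -> iter k f (h x) = h (iter k g x).
Proof. by move=> fh; elim: k => [//|k IH]; rewrite /= IH fh. Qed.

Lemma iter_can_subn (f g : M -> M) j m x : cancel f g -> (j <= m)%N ->
  iter j g (iter m f x) = iter (m - j) f x.
Proof.
move=> fK jm; rewrite -{1}(subnKC jm) iterD.
elim: j {jm} (iter (m - j) f x) => [//|j IH] y.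
by rewrite [iter j.+1 f y]iterS iterSr fK IH.
Qed.

End Preliminaries.

Section Reflection.
Context {R : realType} {M : pseudoPMetricType R}.
Variables (phi theta : M -> M).
Hypotheses (phi_cont : continuous phi) (theta_cont : continuous theta).
Hypothesis thetaK : involutive theta.

Definition reflects_orbits (psi : M -> M) {n} (sigma : 'I_n -> 'I_n) : Prop :=
  forall (k : 'I_n) x, iter k phi (psi x) = theta (iter (sigma k) phi x).

Lemma reflects_orbits_commute n :
  (forall x, phi (theta x) = theta (phi x)) -> reflects_orbits theta (@id 'I_n).
Proof. by move=> comm k x; exact: iter_conj. Qed.

Lemma reflects_orbits_reverse phi_inv n : cancel phi phi_inv ->
  (forall x, phi (theta x) = theta (phi_inv x)) ->
  reflects_orbits (theta \o iter n.-1 phi) (@rev_ord n).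
Proof.
move=> phiK comm [k kn] x /=; rewrite (iter_conj _ _ comm) iter_can_subn //; last by lia.
by congr (theta (iter _ phi x)); lia.
Qed.

Lemma theta_iter_involutive phi_inv n : cancel phi phi_inv ->
  (forall x, phi (theta x) = theta (phi_inv x)) -> involutive (theta \o iter n phi).
Proof. by move=> phiK comm x /=; rewrite (iter_conj _ _ comm) thetaK iter_can_subn ?subnn. Qed.

Section Entropy.
Variable Q : set M -> \bar R.
Hypothesis Q_inv : phi_invariant phi Q.

Lemma preimage_cyl_reflect {psi : M -> M} {n} {sigma : 'I_n -> 'I_n} :
  injective sigma -> reflects_orbits psi sigma ->
  forall m (A : 'I_m -> set M) (w : {ffun 'I_n -> 'I_m}),
  psi @^-1` cyl phi A [ffun k => w (sigma k)] = cyl phi (fun i => theta @^-1` A i) w.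
Proof.
move=> /injF_bij [tau _ tauK] refl m A w; apply/seteqP; split => x /= h k.
  by have := h (tau k); rewrite ffunE refl tauK.
by rewrite ffunE refl; exact: h.
Qed.

Lemma join_entropy_reflect j n (sigma : 'I_n -> 'I_n) m (A : 'I_m -> set M) :
  (forall i, borel_sets (A i)) ->
  injective sigma -> reflects_orbits (theta \o iter j phi) sigma ->
  join_entropy (fun B => Q (theta @^-1` B)) phi A n
  = join_entropy Q phi (fun i => theta @^-1` A i) n.
Proof.
move=> hA sigma_inj refl; have /injF_bij [tau _ tauK] := sigma_inj.
pose relabel (w : {ffun 'I_n -> 'I_m}) := [ffun k => w (sigma k)].
have relabel_inj : injective relabel.
  move=> w w' /ffunP ww'; apply/ffunP => k.
  by have := ww' (tau k); rewrite !ffunE tauK.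
rewrite /join_entropy (reindex_inj relabel_inj); apply: eq_bigr => w _.
rewrite -(phi_invariant_iter j phi_cont Q_inv); last first.
  by apply: borel_preimage => //; exact: borel_cyl.
by rewrite -comp_preimage (preimage_cyl_reflect sigma_inj refl).
Qed.

Lemma ks_entropy_preimage (P : set M -> \bar R) :
  (forall m (A : 'I_m -> set M), is_borel_partition A -> forall n,
     join_entropy P phi A n = join_entropy Q phi (fun i => theta @^-1` A i) n) ->
  ks_entropy P phi = ks_entropy Q phi.
Proof.
have thetaKA m (A : 'I_m -> set M) : (fun i => theta @^-1` (theta @^-1` A i)) = A.
  by apply: funext => i; apply/seteqP; split => x /=; rewrite thetaK.
move=> hP; rewrite /ks_entropy; congr ereal_sup; apply/seteqP.
split => _ [m [A [pA ->]]]; exists m, (fun i => theta @^-1` A i);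
  (split; first exact: borel_partition_preimage); rewrite /entropy_part;
  congr limn_esup; apply: funext => n; first by rewrite hP.
by rewrite hP ?thetaKA //; exact: borel_partition_preimage.
Qed.

Lemma ks_entropy_reflect :
  (forall n, exists j (sigma : 'I_n -> 'I_n),
     injective sigma /\ reflects_orbits (theta \o iter j phi) sigma) ->
  ks_entropy (fun B => Q (theta @^-1` B)) phi = ks_entropy Q phi.
Proof.
move=> refl; apply: ks_entropy_preimage => m A [hA _] n.
have [j [sigma [sigma_inj hsigma]]] := refl n.
exact: join_entropy_reflect hsigma.
Qed.

End Entropy.

Section Pressure.
Local Open Scope ereal_scope.

Lemma le_elog (x y : \bar R) : x <= y -> elog x <= elog y.
Proof.
case: x => [r| |]; case: y => [s| |] //=.
- rewrite lee_fin => rs; have [r0|_] := ltP 0%R r; last exact: leNye.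
  by rewrite (lt_le_trans r0 rs) lee_fin ler_ln // posrE (lt_le_trans r0 rs).
- by move=> _; case: ifP => _; rewrite ?leey ?leNye.
- by move=> _; exact: leNye.
Qed.

Lemma le_limn_esup (u v : nat -> \bar R) :
  (forall n, u n <= v n) -> limn_esup u <= limn_esup v.
Proof.
move=> uv; apply: le_ereal_inf_tmp => _ [V FV <-].
apply: (@le_trans _ _ (ereal_sup (u @` V))); first by apply: ereal_inf_lbound; exists V.
apply: ge_ereal_sup => _ [n Vn <-]; apply: le_trans (uv n) _.
by apply: ereal_sup_ubound; exists n.
Qed.

Lemma cover_inf_comp_le (psi : M -> M) (g : M -> R) n (e del : R) :
  involutive psi ->
  (forall x z, bowen_ball phi n x del z -> bowen_ball phi n (psi x) e (psi z)) ->
  cover_inf phi g n e <= cover_inf phi (g \o psi) n del.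
Proof.
move=> psiK hb; apply: ereal_inf_le_tmp => _ [s hs <-]; exists (map psi s).
  move=> y; have [x xs hx] := hs (psi y); exists (psi x); first exact: map_f.
  by rewrite -(psiK y); exact: hb.
by rewrite big_map.
Qed.

Lemma pressure_le_comp (psi : nat -> M -> M) (G : nat -> M -> R) :
  (forall n, involutive (psi n)) ->
  (forall e : R, (0 < e)%R -> exists2 del : R, (0 < del)%R & forall n x z,
     bowen_ball phi n x del z -> bowen_ball phi n (psi n x) e (psi n z)) ->
  pressure phi G <= pressure phi (fun n => G n \o psi n).
Proof.
move=> psiK hu; apply: ge_ereal_sup => _ [e e0 <-].
have [del del0 hb] := hu e e0; apply: le_trans (ereal_sup_ubound _); last by exists del.
apply: le_limn_esup => n; apply: lee_wpmul2l; first by rewrite lee_fin invr_ge0.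
by apply/le_elog/cover_inf_comp_le => // x z; exact: hb.
Qed.

Hypothesis M_compact : compact [set: M].

Lemma bowen_ball_reflect (e : R) : (0 < e)%R ->
  exists2 del : R, (0 < del)%R & forall psi n (sigma : 'I_n -> 'I_n) x z,
    reflects_orbits psi sigma ->
    bowen_ball phi n x del z -> bowen_ball phi n (psi x) e (psi z).
Proof.
move=> e0; have [del del0 thetaU] := compact_unif_continuous M_compact theta_cont _ e0.
exists del => // psi n sigma x z refl hb k kn.
by rewrite (refl (Ordinal kn)) (refl (Ordinal kn)); apply/thetaU/hb.
Qed.

Lemma pressure_reflect (psi : nat -> M -> M) (G : nat -> M -> R) :
  (forall n, involutive (psi n)) ->
  (forall n, exists sigma : 'I_n -> 'I_n, reflects_orbits (psi n) sigma) ->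
  pressure phi (fun n => G n \o psi n) = pressure phi G.
Proof.
move=> psiK refl.
have hu e : (0 < e)%R -> exists2 del : R, (0 < del)%R & forall n x z,
    bowen_ball phi n x del z -> bowen_ball phi n (psi n x) e (psi n z).
  move=> /bowen_ball_reflect [del del0 hb]; exists del => // n x z.
  by have [sigma hsigma] := refl n; exact: hb hsigma.
apply: le_anti; apply/andP; split; last exact: pressure_le_comp.
have GE : G = fun n => (G n \o psi n) \o psi n.
  by apply: funext => n; apply: funext => x /=; rewrite psiK.
by rewrite [X in _ <= pressure phi X]GE; exact: pressure_le_comp.
Qed.

End Pressure.
End Reflection.

Theorem lemma3p7 (R : realType) (M : pseudoPMetricType R) (d : M -> M -> R)
  (d_sep : forall x y, d x y = 0 <-> x = y)
  (d_sym : forall x y, d x y = d y x)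
  (d_tri : forall x y z, d x z <= d x y + d y z)
  (d_ball : forall (x y : M) (e : R), 0 < e -> ball x e y <-> d x y < e)
  (M_compact : compact [set: M])
  (phi : M -> M) (phi_cont : continuous phi)
  (theta : M -> M) (thetas : nat -> M -> M)
  (hcase :
     (* (C) *)
     (homeomorphism theta /\ theta \o theta = id /\
      phi = theta \o phi \o theta /\ thetas = (fun _ => theta))
     \/
     (* (R) *)
     (exists phi_inv : M -> M,
        cancel phi phi_inv /\ cancel phi_inv phi /\ continuous phi_inv /\
        homeomorphism theta /\ theta \o theta = id /\
        phi_inv = theta \o phi \o theta /\
        thetas = (fun n => theta \o iter n.-1 phi))) :
  (forall Q : probability (borelM M) R,
     phi_invariant phi (Q : set M -> \bar R) ->
     ks_entropy (fun A : set M => Q (theta @^-1` A)) phi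
       = ks_entropy (Q : set M -> \bar R) phi) /\
  (forall G : nat -> M -> R, in_A phi G ->
     pressure phi (fun n => G n \o thetas n) = pressure phi G).
Proof.
have [theta_cont thetaK [j [thetasE thetasK thetas_refl]]] :
  [/\ continuous theta, involutive theta & exists j : nat -> nat,
    [/\ forall n, thetas n = theta \o iter (j n) phi,
        forall n, involutive (thetas n) &
        forall n, exists sigma : 'I_n -> 'I_n,
          injective sigma /\ reflects_orbits phi theta (thetas n) sigma]].
  case: hcase => [[[_ [_ [_ [thc _]]]] [tt [phiE thetasE]]]|
                  [phi_inv [phiK [_ [_ [[_ [_ [_ [thc _]]]] [tt [phi_invE thetasE]]]]]]]];
    rewrite thetasE; have thK : involutive theta by move=> x; rewrite -[RHS]/(id x) -tt.
  - have comm x : phi (theta x) = theta (phi x) by rewrite {1}phiE /= thK.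
    split=> //; exists (fun => 0%N); split=> // n.
    by exists id; split; [exact: inj_id | exact: reflects_orbits_commute].
  - have comm x : phi (theta x) = theta (phi_inv x) by rewrite phi_invE /= thK.
    split=> //; exists predn; split=> // n; first exact: theta_iter_involutive comm.
    by exists (@rev_ord n); split; [exact: rev_ord_inj | exact: reflects_orbits_reverse comm].
split=> [Q Q_inv | G _].
  apply: ks_entropy_reflect => // n; have [sigma [sigma_inj refl]] := thetas_refl n.
  by exists (j n), sigma; rewrite -thetasE.
apply: (pressure_reflect phi theta) => // n.
by have [sigma [_ refl]] := thetas_refl n; exists sigma.
Qed.
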